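(* Let $\sim$ be a right congruence on $\Sigma^*$ of finite index and let $\approx$ be its suffix expansion. Then $|\Sigma^{\le n}/{\approx}|$ is polynomially bounded in $n$ if and only if $\sim$ has no critical tuple.
   Context: A right congruence on $\Sigma^*$ is an equivalence $\sim$ with $x\sim y\Rightarrow xz\sim yz$ for all $z$. Its suffix expansion $\approx$ is defined by $a_1\cdots a_n\approx b_1\cdots b_m$ iff $n=m$ and $a_i\cdots a_n\sim b_i\cdots b_n$ for all $1\le i\le n$. A critical tuple in $\sim$ is a tuple $(u_2,v_2,u,v)$ of words with $|u_2|=|v_2|\ge1$, $u=u_1u_2$ and $v=v_1v_2$ for some words $u_1,v_1$, and $u_2w\not\sim v_2w$ for all $w\in\{u,v\}^*$. *)

From mathcomp Require Import all_boot.
Set Implicit Arguments. Unset Strict Implicit. Unset Printing Implicit Defensive.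

Section Defs.
Variable S : finType.
Implicit Types (sim : rel (seq S)).

Definition equivalence_rel sim : Prop :=
  [/\ forall x, sim x x,
      forall x y, sim x y -> sim y x &
      forall x y z, sim x y -> sim y z -> sim x z].

Definition right_congruence sim : Prop :=
  equivalence_rel sim /\ forall x y z, sim x y -> sim (x ++ z) (y ++ z).

Definition finite_index sim : Prop :=
  exists reps : seq (seq S), forall w, exists2 r, r \in reps & sim w r.

Definition suffix_expansion sim : rel (seq S) :=
  fun a b => (size a == size b) &&
             all (fun i => sim (drop i a) (drop i b)) (iota 0 (size a)).

Definition words_of_len (m : nat) : seq (seq S) :=
  [seq tval t | t <- enum {: m.-tuple S}].
Definition words_upto (n : nat) : seq (seq S) :=
  flatten [seq words_of_len m | m <- iota 0 n.+1].

Definition num_classes (r : rel (seq S)) (W : seq (seq S)) : nat :=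
  size (undup [seq [seq y <- W | r x y] | x <- W]).

Definition in_star2 (u v w : seq S) : Prop :=
  exists ws : seq (seq S),
    all (fun x => (x == u) || (x == v)) ws /\ w = flatten ws.

Definition critical_tuple sim (u2 v2 u v : seq S) : Prop :=
  [/\ size u2 = size v2, 1 <= size u2,
      exists u1, u = u1 ++ u2,
      exists v1, v = v1 ++ v2 &
      forall w, in_star2 u v w -> ~~ sim (u2 ++ w) (v2 ++ w)].

Definition has_critical_tuple sim : Prop :=
  exists u2 v2 u v, critical_tuple sim u2 v2 u v.

Definition poly_bounded (f : nat -> nat) : Prop :=
  exists c k : nat, forall n, f n <= c * n.+1 ^ k.

End Defs.

From mathcomp Require Import all_boot zify.
Set Implicit Arguments. Unset Strict Implicit. Unset Printing Implicit Defensive.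

(* Since ~ has finite index, the actions p |-> p s of suffixes s on the classes
   of ~ form a finite set C.  Without critical tuple, a word w is determined up
   to ~~ by its length and, for each action g, the first and the last position k
   at which drop k w has action g: at a position i of action g, the segments of
   w and w' between these two positions are loops preserving g, and a failure
   of drop i w ~ drop i w' would turn the two loops into a critical tuple.
   Hence there are at most (n+1)^(2|C|+1) classes of words of length <= n.
   Conversely, for a critical tuple (u2, v2, u1 u2, v1 v2), the 2^m words made
   of m blocks uv or vu are pairwise inequivalent: at the rightmost block where
   two of them differ, they end in v1 v2 u1 u2 z and u1 u2 v1 v2 z with z in
   {u,v}^*, and their suffixes u2 z and v2 z have the same length. *)

Lemma exp2_gt_linear a b : exists j, a + b * j < 2 ^ j.
Proof.
have t_lt := ltn_expl (a + 2 * b + 1) (isT : 1 < 2).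
exists (2 * (a + 2 * b + 1)); rewrite mul2n -addnn expnD.
by apply: leq_trans (leq_mul t_lt t_lt) => {t_lt}; nia.
Qed.

Lemma exp2_gt_poly c k : exists m, c * m.+1 ^ k < 2 ^ m.
Proof.
have [j lt_j] := exp2_gt_linear c k.
exists (2 ^ j).-1; rewrite prednK ?expn_gt0 // -expnM.
apply: (@leq_trans (2 ^ (c + j * k))).
  by rewrite expnD ltn_pmul2r ?expn_gt0 // ltn_expl.
by rewrite leq_exp2l // -ltnS prednK ?expn_gt0 // mulnC.
Qed.

Section FirstLast.
Variables (n : nat) (P : pred nat).

Definition first_below := find P (iota 0 n).

(* Shifted by one so that [0] means that [P] has no witness below [n]. *)
Definition succ_last_below := \max_(k < n | P k) k.+1.

Lemma first_below_le i : i < n -> P i -> first_below <= i.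
Proof.
move=> i_n Pi; rewrite leqNgt; apply/negP => /(before_find 0).
by rewrite nth_iota // Pi.
Qed.

Lemma first_below_size : first_below <= n.
Proof. by rewrite /first_below -{2}(size_iota 0 n) find_size. Qed.

Lemma first_belowP : first_below < n -> P first_below.
Proof.
move=> lt_n; have := nth_find 0 (_ : has P (iota 0 n)).
by rewrite nth_iota // add0n; apply; rewrite has_find size_iota.
Qed.

Lemma succ_last_below_gt i : i < n -> P i -> i < succ_last_below.
Proof.
move=> i_n Pi.
exact: (@leq_bigmax_cond _ (fun k : 'I_n => P k) (fun k : 'I_n => k.+1) (Ordinal i_n)).
Qed.

Lemma succ_last_below_size : succ_last_below <= n.
Proof. by apply/bigmax_leqP => k _; rewrite ltn_ord. Qed.

Lemma succ_last_belowP : 0 < succ_last_below -> P succ_last_below.-1.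
Proof.
rewrite /succ_last_below; case: (pickP (fun k : 'I_n => P k)) => [k0 Pk0 _ | P0].
  by rewrite (bigmax_eq_arg _ Pk0); case: arg_maxnP.
by rewrite big_pred0.
Qed.

End FirstLast.

Lemma first_last_below n (P Q : pred nat) i : i < n -> P i ->
    first_below n P = first_below n Q -> succ_last_below n P = succ_last_below n Q ->
  exists lo hi, [/\ lo <= i <= hi, hi < n, P lo && Q lo & P hi && Q hi].
Proof.
move=> i_n Pi eq_first eq_last.
have lo_i := first_below_le i_n Pi; have i_lt := succ_last_below_gt i_n Pi.
have lo_n : first_below n P < n := leq_ltn_trans lo_i i_n.
have last_gt0 : 0 < succ_last_below n P := leq_ltn_trans (leq0n i) i_lt.
exists (first_below n P), (succ_last_below n P).-1; split.
- by rewrite lo_i -ltnS prednK.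
- by rewrite prednK // succ_last_below_size.
- by rewrite first_belowP // eq_first first_belowP // -eq_first.
- by rewrite succ_last_belowP // eq_last succ_last_belowP // -eq_last.
Qed.

Lemma drop_segment (T : Type) (w : seq T) m n :
  m <= n -> drop m w = take (n - m) (drop m w) ++ drop n w.
Proof.
by move=> le_mn; rewrite -{1}(cat_take_drop (n - m) (drop m w)) drop_drop subnK.
Qed.

Lemma inord_inj n m m' : m <= n -> m' <= n -> inord m = inord m' :> 'I_n.+1 -> m = m'.
Proof. by move=> m_n m'_n /(congr1 (@nat_of_ord _)); rewrite !inordK. Qed.

Lemma mem_words_upto (S : finType) n (w : seq S) : (w \in words_upto S n) = (size w <= n).
Proof.
apply/flatten_mapP/idP => [[m] | le_wn].
  by rewrite mem_iota ltnS => /andP[_ le_mn] /mapP[t _ ->]; rewrite size_tuple.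
exists (size w); first by rewrite mem_iota ltnS.
by apply/mapP; exists (in_tuple w); rewrite ?mem_enum.
Qed.

Section Counting.
Variables (S : finType) (r : rel (seq S)) (W : seq (seq S)).

Lemma num_classes_le_card (K : finType) (key : seq S -> K) :
    symmetric r -> transitive r -> {in W &, forall x y, key x = key y -> r x y} ->
  num_classes r W <= #|K|.
Proof.
move=> r_sym r_trans key_r.
pose cls x := [seq y <- W | r x y].
pose rep k := nth [::] W (find (fun x => key x == k) W).
have cls_rep x : x \in W -> cls x = cls (rep (key x)).
  move=> xW; have has_x : has (fun y => key y == key x) W by apply/hasP; exists x.
  have rep_W : rep (key x) \in W by rewrite mem_nth // -has_find.
  have /eqP key_rep := nth_find [::] has_x.
  have r_x_rep := key_r _ _ xW rep_W (esym key_rep).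
  apply: eq_filter => y; apply/idP/idP => [r_xy | r_rep_y].
    by apply: (r_trans x _ _ _ r_xy); rewrite r_sym.
  exact: r_trans r_x_rep r_rep_y.
rewrite /num_classes cardE -(size_map (cls \o rep)).
apply: uniq_leq_size; first exact: undup_uniq.
move=> c; rewrite mem_undup => /mapP[x xW ->]; rewrite -/(cls x) cls_rep //.
by apply: map_f; rewrite mem_enum.
Qed.

Lemma card_le_num_classes (I : finType) (f : I -> seq S) :
    reflexive r -> (forall i, f i \in W) -> (forall i j, r (f i) (f j) -> i = j) ->
  #|I| <= num_classes r W.
Proof.
move=> r_refl fW f_inj; rewrite /num_classes cardE.
rewrite -(size_map (fun i => [seq y <- W | r (f i) y])).
apply: uniq_leq_size.
  rewrite map_inj_uniq ?enum_uniq // => i j eq_cls; apply: f_inj.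
  have : f j \in [seq y <- W | r (f j) y] by rewrite mem_filter r_refl fW.
  by rewrite -eq_cls mem_filter => /andP[].
by move=> c /mapP[i _ ->]; rewrite mem_undup; apply: map_f.
Qed.

End Counting.

Section RightCongruence.
Variables (S : finType) (sim : rel (seq S)).
Hypothesis sim_rc : right_congruence sim.

Lemma sim_refl : reflexive sim.
Proof. by case: sim_rc => -[]. Qed.

Lemma sim_sym x y : sim x y -> sim y x.
Proof. by case: sim_rc => -[_ sym _] _; apply: sym. Qed.

Lemma sim_trans x y z : sim x y -> sim y z -> sim x z.
Proof. by case: sim_rc => -[_ _ trans] _; apply: trans. Qed.

Lemma sim_catr x y z : sim x y -> sim (x ++ z) (y ++ z).
Proof. by case: sim_rc => _ catr; apply: catr. Qed.

Lemma suffix_expansion_refl : reflexive (suffix_expansion sim).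
Proof.
by move=> x; rewrite /suffix_expansion eqxx; apply/allP => i _; apply: sim_refl.
Qed.

Lemma suffix_expansion_sym : symmetric (suffix_expansion sim).
Proof.
suff se_sym x y : suffix_expansion sim x y -> suffix_expansion sim y x.
  by move=> x y; apply/idP/idP; apply: se_sym.
case/andP=> /eqP eq_size /allP se_xy; rewrite /suffix_expansion -eq_size eqxx /=.
by apply/allP => i /se_xy /sim_sym.
Qed.

Lemma suffix_expansion_trans : transitive (suffix_expansion sim).
Proof.
move=> y x z /andP[/eqP sz_xy /allP se_xy] /andP[/eqP sz_yz /allP se_yz].
rewrite /suffix_expansion sz_xy sz_yz eqxx; apply/allP => i i_lt.
by apply: (sim_trans (se_xy i _) (se_yz i _)); rewrite ?sz_xy sz_yz.
Qed.

Definition same_action (s s' : seq S) := forall p, sim (p ++ s) (p ++ s').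

Lemma same_action_sym s s' : same_action s s' -> same_action s' s.
Proof. by move=> act p; apply: sim_sym. Qed.

Lemma same_action_trans s1 s2 s3 :
  same_action s1 s2 -> same_action s2 s3 -> same_action s1 s3.
Proof. by move=> act12 act23 p; apply: sim_trans (act12 p) (act23 p). Qed.

Lemma same_action_catl y s s' : same_action s s' -> same_action (y ++ s) (y ++ s').
Proof. by move=> act p; rewrite !catA. Qed.

Lemma same_action_star u v w s :
    same_action (u ++ s) s -> same_action (v ++ s) s -> in_star2 u v w ->
  same_action (w ++ s) s.
Proof.
move=> act_u act_v [ws [uv_ws ->]].
elim: ws uv_ws => [_ p | x ws IH /andP[x_uv /IH act_ws]] /=; first exact: sim_refl.
rewrite -catA; apply: same_action_trans (same_action_catl x act_ws) _.
by case/orP: x_uv => /eqP ->.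
Qed.

Lemma finite_index_action_code : finite_index sim ->
  exists (C : finType) (code : seq S -> C),
    forall s s', code s = code s' -> same_action s s'.
Proof.
move=> [reps reps_cover].
exists {ffun seq_sub reps * seq_sub reps -> bool}.
exists (fun s => [ffun rq => sim (ssval rq.1 ++ s) (ssval rq.2)]) => s s' code_eq p.
have [r r_reps p_r] := reps_cover p; have [q q_reps rs_q] := reps_cover (r ++ s).
move/ffunP/(_ (SeqSub r_reps, SeqSub q_reps)): code_eq.
rewrite !ffunE /= rs_q => /esym rs'_q.
apply: sim_trans (sim_catr s p_r) _; apply: sim_trans rs_q _.
by apply: sim_sym; apply: sim_trans (sim_catr s' p_r) rs'_q.
Qed.

Hypothesis no_critical : ~ has_critical_tuple sim.

Lemma no_critical_loop x y x' y' s s' :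
    size y = size y' -> same_action s s' ->
    same_action (x ++ y ++ s) s -> same_action (x' ++ y' ++ s') s' ->
  sim (y ++ s) (y' ++ s').
Proof.
move=> sz_y act_s loop loop'.
have [/size0nil y0 | y_gt0] := posnP (size y).
  by move: sz_y; rewrite y0 => /esym/size0nil ->; apply: act_s.
apply/idPn => not_sim; apply: no_critical; exists y, y', (x ++ y), (x' ++ y').
split=> //; [by exists x | by exists x' | move=> w star_w; apply/negP => sim_w].
have loop'_s : same_action ((x' ++ y') ++ s) s.
  apply: same_action_trans (same_action_catl (x' ++ y') act_s) _.
  by rewrite -catA; apply: same_action_trans loop' (same_action_sym act_s).
have act_w : same_action (w ++ s) s.
  by apply: same_action_star star_w; rewrite // -catA.
apply: (negP not_sim); apply: sim_trans (sim_sym (act_w y)) _.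
apply: sim_trans (act_s y'); apply: sim_trans (act_w y').
by rewrite !catA; apply: sim_catr.
Qed.

Lemma no_critical_sim_drop w w' lo i hi :
    size w = size w' -> lo <= i <= hi -> hi <= size w ->
    same_action (drop lo w) (drop hi w) -> same_action (drop lo w') (drop hi w') ->
    same_action (drop hi w) (drop hi w') ->
  sim (drop i w) (drop i w').
Proof.
move=> sz_w /andP[lo_i i_hi] hi_w loop loop' act_hi.
rewrite (drop_segment w i_hi) (drop_segment w' i_hi).
apply: (@no_critical_loop (take (i - lo) (drop lo w)) _ (take (i - lo) (drop lo w'))) => //.
- by rewrite !size_takel ?size_drop ?leq_sub2r // -sz_w.
- by rewrite -!drop_segment.
- by rewrite -!drop_segment.
Qed.

End RightCongruence.

Section ActionKey.
Variables (S : finType) (sim : rel (seq S)) (C : finType) (code : seq S -> C).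
Hypothesis sim_rc : right_congruence sim.
Hypothesis code_action : forall s s', code s = code s' -> same_action sim s s'.
Hypothesis no_critical : ~ has_critical_tuple sim.

Definition occurs_at (w : seq S) (g : C) : pred nat := fun k => code (drop k w) == g.

Definition action_key n (w : seq S) : 'I_n.+1 * {ffun C -> 'I_n.+1 * 'I_n.+1} :=
  (inord (size w), [ffun g => (inord (first_below (size w) (occurs_at w g)),
                               inord (succ_last_below (size w) (occurs_at w g)))]).

Lemma action_key_suffix_expansion n w w' : size w <= n -> size w' <= n ->
  action_key n w = action_key n w' -> suffix_expansion sim w w'.
Proof.
move=> w_n w'_n key_eq; have sz_w := inord_inj w_n w'_n (congr1 fst key_eq).
rewrite /suffix_expansion sz_w eqxx; apply/allP => i.
rewrite mem_iota add0n -sz_w => /andP[_ i_w].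
move: key_eq; rewrite /action_key -sz_w => -[/ffunP/(_ (code (drop i w)))].
rewrite !ffunE => -[/inord_inj first_eq /inord_inj last_eq].
have le_n m : m <= size w -> m <= n by move/leq_trans; apply.
have occurs_i : occurs_at w (code (drop i w)) i := eqxx _.
have [lo [hi [lo_i_hi hi_w /andP[/eqP lo_g /eqP lo_g'] /andP[/eqP hi_g /eqP hi_g']]]] :=
  first_last_below i_w occurs_i
    (first_eq (le_n _ (first_below_size _ _)) (le_n _ (first_below_size _ _)))
    (last_eq (le_n _ (succ_last_below_size _ _)) (le_n _ (succ_last_below_size _ _))).
apply: no_critical_sim_drop lo_i_hi (ltnW hi_w) _ _ _ => //.
all: by apply: code_action; congruence.
Qed.

Lemma no_critical_num_classes_le n :
  num_classes (suffix_expansion sim) (words_upto S n) <= n.+1 ^ (2 * #|C|).+1.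
Proof.
rewrite expnS expnM -mulnn -(card_ord n.+1) -card_prod -card_ffun -card_prod.
apply: (num_classes_le_card (key := action_key n)).
- exact: suffix_expansion_sym.
- exact: suffix_expansion_trans.
- by move=> x y; rewrite !mem_words_upto; apply: action_key_suffix_expansion.
Qed.

End ActionKey.

Section CriticalTuple.
Variables (S : finType) (sim : rel (seq S)) (u2 v2 u v : seq S).
Hypothesis sim_rc : right_congruence sim.
Hypothesis critical : critical_tuple sim u2 v2 u v.

Definition block (b : bool) := if b then v ++ u else u ++ v.

(* The head of [t] is the rightmost block, so induction on [t] peels off the
   block next to the common suffix. *)
Fixpoint blocks (t : seq bool) : seq S :=
  if t is b :: t' then blocks t' ++ block b else [::].

Lemma size_blocks t : size (blocks t) = size t * (size u + size v).
Proof.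
by elim: t => //= b t IH; rewrite size_cat IH /block; case: b; rewrite size_cat; nia.
Qed.

Lemma in_star2_block b z : in_star2 u v z -> in_star2 u v (block b ++ z).
Proof.
move=> [ws [uv_ws ->]]; rewrite /block.
by case: b; [exists [:: v, u & ws] | exists [:: u, v & ws]];
  rewrite /= uv_ws !eqxx ?orbT catA.
Qed.

Lemma critical_swap_not_suffix_expansion p p' z :
    size p = size p' -> in_star2 u v z ->
  ~~ suffix_expansion sim (p ++ block true ++ z) (p' ++ block false ++ z).
Proof.
case: critical => sz_2 u2_gt0 [u1 def_u] [v1 def_v] critical_w sz_p star_z.
apply/negP => /andP[_ /allP se].
have split_vu : p ++ block true ++ z = (p ++ v ++ u1) ++ u2 ++ z.
  by rewrite /block def_u !catA.
have split_uv : p' ++ block false ++ z = (p' ++ u ++ v1) ++ v2 ++ z.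
  by rewrite /block def_v !catA.
have sz_k : size (p' ++ u ++ v1) = size (p ++ v ++ u1).
  by rewrite def_u def_v !size_cat sz_p sz_2; lia.
have k_lt : size (p ++ v ++ u1) \in iota 0 (size (p ++ block true ++ z)).
  by rewrite mem_iota split_vu !size_cat; lia.
move: (se _ k_lt); rewrite split_vu split_uv drop_size_cat // (drop_size_cat _ sz_k).
by move/negP: (critical_w _ star_z).
Qed.

Lemma blocks_not_suffix_expansion t t' z :
    size t = size t' -> t != t' -> in_star2 u v z ->
  ~~ suffix_expansion sim (blocks t ++ z) (blocks t' ++ z).
Proof.
elim: t t' z => [|b t IH] [|b' t'] // z [sz_t] + star_z /=; rewrite -!catA.
case: (eqVneq b b') => [<- | ne_b] ne_t.
  apply: IH => //; last exact: in_star2_block.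
  by move: ne_t; apply: contra_neq => ->.
have sz_blocks : size (blocks t) = size (blocks t') by rewrite !size_blocks sz_t.
case: b b' ne_b {ne_t} => -[] // _; first exact: critical_swap_not_suffix_expansion.
by rewrite suffix_expansion_sym // critical_swap_not_suffix_expansion.
Qed.

Lemma critical_num_classes_ge m :
  2 ^ m <= num_classes (suffix_expansion sim) (words_upto S (m * (size u + size v))).
Proof.
rewrite -[2]card_bool -card_tuple.
apply: (card_le_num_classes (f := fun t : m.-tuple bool => blocks t)).
- exact: suffix_expansion_refl.
- by move=> t; rewrite mem_words_upto size_blocks size_tuple.
move=> t t'; apply: contraTeq => ne_t.
have star_nil : in_star2 u v [::] by exists [::].
by rewrite -[blocks t]cats0 -[blocks t']cats0 blocks_not_suffix_expansion ?size_tuple.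
Qed.

Lemma critical_not_poly_bounded :
  ~ poly_bounded (fun n => num_classes (suffix_expansion sim) (words_upto S n)).
Proof.
move=> [c [k bounded]].
have : 0 < size u + size v by case: critical => _ u2_gt0 [u1 ->] _ _; rewrite size_cat; lia.
set L := size u + size v => L_gt0.
have [m] := exp2_gt_poly (c * L ^ k) k; apply/negP; rewrite -leqNgt.
apply: leq_trans (critical_num_classes_ge m) _; apply: leq_trans (bounded _) _.
rewrite -mulnA -expnMn leq_mul2l; apply/orP; right.
have le_mL : (m * L).+1 <= L * m.+1 by nia.
by case: k {bounded} => // k; rewrite leq_exp2r.
Qed.

End CriticalTuple.

Theorem theorem18 (S : finType) (sim : rel (seq S)) :
  right_congruence sim -> finite_index sim ->
  (poly_bounded (fun n => num_classes (suffix_expansion sim) (words_upto S n))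
   <-> ~ has_critical_tuple sim).
Proof.
move=> sim_rc sim_fin; split=> [bounded [u2 [v2 [u [v critical]]]] | no_critical].
  exact: critical_not_poly_bounded sim_rc critical bounded.
have [C [code code_action]] := finite_index_action_code sim_rc sim_fin.
exists 1, (2 * #|C|).+1 => n; rewrite mul1n.
exact: no_critical_num_classes_le sim_rc code_action no_critical n.
Qed.
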